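(* Let $\mathbb{F}=\mathbb{F}_{q^m}$, let $k\ge 1$, and let $(x_1,y_1),\dots,(x_r,y_r)\in\mathbb{F}\times\mathbb{F}$ be linearly independent over $\mathbb{F}_q$. Run the following procedure. Initialize $f_0(x,y)=x$, $f_1(x,y)=y$. For $i=1,\dots,r$: set $\Delta_0=f_0(x_i,y_i)$, $\Delta_1=f_1(x_i,y_i)$; if $\Delta_0=0$, replace $f_1$ by $f_1^q-\Delta_1^{q-1}f_1$; else if $\Delta_1=0$, replace $f_0$ by $f_0^q-\Delta_0^{q-1}f_0$; else, if $\deg_{1,k-1}(f_0)\le\deg_{1,k-1}(f_1)$, simultaneously replace $f_1$ by $\Delta_1 f_0-\Delta_0 f_1$ and $f_0$ by $f_0^q-\Delta_0^{q-1}f_0$; otherwise simultaneously replace $f_0$ by $\Delta_1 f_0-\Delta_0 f_1$ and $f_1$ by $f_1^q-\Delta_1^{q-1}f_1$ (in each simultaneous update, the right-hand sides use the values of $f_0,f_1$ before the update). Then the final polynomials $f_0$ and $f_1$ are, respectively, $x$-minimal and $y$-minimal with respect to the set $\{(x_i,y_i)\}_{i=1}^r$.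
   Context: A bivariate linearized polynomial over $\mathbb{F}$ is $f(x,y)=f_x(x)+f_y(y)$ with $f_x(x)=\sum_i a_i x^{q^i}$, $f_y(y)=\sum_j b_j y^{q^j}$, $a_i,b_j\in\mathbb{F}$; its monomials are $x^{[i]}=x^{q^i}$ and $y^{[j]}=y^{q^j}$. $f^q$ denotes $(f(x,y))^q$, again a bivariate linearized polynomial. If $f_x\not\equiv0$ has degree $q^{d_x(f)}$ and $f_y\not\equiv0$ has degree $q^{d_y(f)}$, the $(1,k-1)$-weighted degree is $\deg_{1,k-1}(f)=\max\{d_x(f),k-1+d_y(f)\}$ (omitting a term whose part is identically zero). Monomials are totally ordered by weight, where $x^{[i]}$ has weight $i$ and $y^{[j]}$ has weight $k-1+j$, with ties broken by declaring $x^{[i]}$ smaller than $y^{[j]}$ when their weights are equal. The leading term $\mathrm{lt}(f)$ of a nonzero $f$ is its largest monomial (with nonzero coefficient) in this order. A nonzero bivariate linearized polynomial $f$ is $x$-minimal with respect to a finite set of points $P\subset\mathbb{F}\times\mathbb{F}$ if $f$ vanishes at all points of $P$, $\mathrm{lt}(f)$ is of the form $x^{[d]}$, and no nonzero bivariate linearized polynomial $g$ vanishing on $P$ with $\mathrm{lt}(g)$ of the form $x^{[e]}$ has $\mathrm{lt}(g)$ strictly smaller than $\mathrm{lt}(f)$. $y$-minimal is defined identically with leading terms of the form $y^{[j]}$. *)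

From HB Require Import structures.
From mathcomp Require Import all_boot all_order all_algebra all_field.
Set Implicit Arguments. Unset Strict Implicit. Unset Printing Implicit Defensive.
Import GRing.Theory.
Local Open Scope ring_scope.

(* A bivariate linearized polynomial f(x,y) = f_x(x) + f_y(y) over F,
   f_x = sum_i a_i x^{q^i}, f_y = sum_j b_j y^{q^j}, is represented by the
   pair of "q-associate" coefficient polynomials (A, B) with A`_i = a_i and
   B`_j = b_j. *)
Record blin (F : fieldType) := BLin { blx : {poly F}; bly : {poly F} }.

Section BLin.
Variables (F : fieldType) (q k : nat).

Definition blin_eval (f : blin F) (x0 y0 : F) : F :=
  \sum_(i < size (blx f)) (blx f)`_i * x0 ^+ (q ^ i)%N
  + \sum_(j < size (bly f)) (bly f)`_j * y0 ^+ (q ^ j)%N.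

Definition blin_zero (f : blin F) : bool := (blx f == 0) && (bly f == 0).

Definition blin_scale (c : F) (f : blin F) : blin F :=
  BLin (c *: blx f) (c *: bly f).

Definition blin_sub (f g : blin F) : blin F :=
  BLin (blx f - blx g) (bly f - bly g).

(* f^q: (sum a_i x^{q^i})^q = sum a_i^q x^{q^{i+1}} (F has characteristic p
   and q is a power of p). *)
Definition blin_frob (f : blin F) : blin F :=
  BLin (map_poly (fun a => a ^+ q) (blx f) * 'X)
       (map_poly (fun a => a ^+ q) (bly f) * 'X).

Definition wdeg (f : blin F) : nat :=
  maxn (if blx f != 0 then (size (blx f)).-1 else 0%N)
       (if bly f != 0 then (k - 1 + (size (bly f)).-1)%N else 0%N).

(* monomials: inl i = x^[i], inr j = y^[j] *)
Definition mono := (nat + nat)%type.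

Definition mweight (mo : mono) : nat :=
  match mo with inl i => i | inr j => (k - 1 + j)%N end.

Definition mono_lt (a b : mono) : bool :=
  (mweight a < mweight b)%N ||
  ((mweight a == mweight b) && match a, b with inl _, inr _ => true | _, _ => false end).

Definition mono_le (a b : mono) : bool := (a == b) || mono_lt a b.

Definition mcoef (f : blin F) (mo : mono) : F :=
  match mo with inl i => (blx f)`_i | inr j => (bly f)`_j end.

Definition is_lt (f : blin F) (mo : mono) : Prop :=
  mcoef f mo != 0 /\ forall mo', mcoef f mo' != 0 -> mono_le mo' mo.

Definition vanishes_on (r : nat) (P : 'I_r -> F * F) (f : blin F) : Prop :=
  forall i, blin_eval f (P i).1 (P i).2 = 0.

Definition x_minimal (r : nat) (P : 'I_r -> F * F) (f : blin F) : Prop :=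
  ~~ blin_zero f /\ vanishes_on P f /\
  exists d, is_lt f (inl d) /\
    forall g e, ~~ blin_zero g -> vanishes_on P g -> is_lt g (inl e) ->
      ~~ mono_lt (inl e) (inl d).

Definition y_minimal (r : nat) (P : 'I_r -> F * F) (f : blin F) : Prop :=
  ~~ blin_zero f /\ vanishes_on P f /\
  exists d, is_lt f (inr d) /\
    forall g e, ~~ blin_zero g -> vanishes_on P g -> is_lt g (inr e) ->
      ~~ mono_lt (inr e) (inr d).

Definition frob_step (D : F) (f : blin F) : blin F :=
  blin_sub (blin_frob f) (blin_scale (D ^+ (q - 1)) f).

Definition algo_step (fs : blin F * blin F) (pt : F * F) : blin F * blin F :=
  let: (f0, f1) := fs in
  let D0 := blin_eval f0 pt.1 pt.2 in
  let D1 := blin_eval f1 pt.1 pt.2 in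
  if D0 == 0 then (f0, frob_step D1 f1)
  else if D1 == 0 then (frob_step D0 f0, f1)
  else if (wdeg f0 <= wdeg f1)%N then
    (frob_step D0 f0, blin_sub (blin_scale D1 f0) (blin_scale D0 f1))
  else
    (blin_sub (blin_scale D1 f0) (blin_scale D0 f1), frob_step D1 f1).

Definition blin_x : blin F := BLin 1 0.
Definition blin_y : blin F := BLin 0 1.

Definition algo (r : nat) (P : 'I_r -> F * F) : blin F * blin F :=
  foldl algo_step (blin_x, blin_y) [seq P i | i <- enum 'I_r].

(* linear independence of the points over F_q = {a | a^q = a} *)
Definition Fq_lin_indep (r : nat) (P : 'I_r -> F * F) : Prop :=
  forall c : 'I_r -> F, (forall i, c i ^+ q = c i) ->
    \sum_(i < r) c i * (P i).1 = 0 -> \sum_(i < r) c i * (P i).2 = 0 ->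
    forall i, c i = 0.

End BLin.

(* The monomials x^[i] and y^[j] are placed at positions 2i and 2(k-1+j)+1 of
   one coefficient sequence [wcoef], so that the weighted monomial order is the
   order of positions and x- and y-monomials are told apart by parity.
   After a list of points has been processed, f0 and f1 vanish on it and their
   leading positions are minimal, within their parity, among the polynomials
   vanishing on it. If f0 and f1 both vanished at the next point p, so would
   every polynomial vanishing on the previous points (cancel its leading term
   against a Frobenius power of f0 or f1); then the Frobenius vector of p would
   be an F-combination of those of the previous points, and the trace to F_q
   turns this into an F_q-dependence. So one of Delta0, Delta1 is nonzero. The
   Frobenius step raises a leading position by two and kills p; minimality
   survives because a polynomial vanishing at p with the old leading position,
   cancelled against the old element, would force the latter to vanish at p.
   The combination step keeps the larger leading position. *)

From mathcomp Require Import all_boot all_order all_algebra all_field.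
Set Implicit Arguments. Unset Strict Implicit. Unset Printing Implicit Defensive.
Import GRing.Theory.
Local Open Scope ring_scope.

Lemma expr_sum_pchar (R : comNzSemiRingType) (n : nat) I (r : seq I) (P : pred I)
    (g : I -> R) :
  [pchar R].-nat n -> (\sum_(i <- r | P i) g i) ^+ n = \sum_(i <- r | P i) g i ^+ n.
Proof.
move=> pcharRn; apply: (big_morph (fun a : R => a ^+ n)) => [a b|].
  exact: exprDn_pchar.
by rewrite expr0n; case/andP: pcharRn => /lt0n_neq0/negbTE ->.
Qed.

Lemma pchar_nat_card_root (F : finFieldType) (q m : nat) :
  (0 < m)%N -> #|F| = (q ^ m)%N -> [pchar F].-nat q.
Proof.
move=> m_gt0 cardF; have [p p_pr pcharFp] := finPcharP F.
rewrite (eq_pnat _ (pcharf_eq pcharFp)).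
have: p.-nat #|F| by rewrite (card_pprimeChar pcharFp) pnatX pnat_id.
by apply: pnat_dvd; rewrite cardF -(prednK m_gt0) expnS dvdn_mulr.
Qed.

Lemma submx_of_colker (R : fieldType) (m1 m2 n : nat) (A : 'M[R]_(m1, n))
    (B : 'M[R]_(m2, n)) :
  (forall c : 'cV_n, A *m c = 0 -> B *m c = 0) -> (B <= A)%MS.
Proof.
move=> kerAB; rewrite submxE; apply/eqP/matrixP => i j.
have := kerAB (col j (cokermx A)).
rewrite colE [A *m _]mulmxA mulmx_coker mul0mx => /(_ erefl).
by rewrite mulmxA -colE => /matrixP /(_ i 0); rewrite !mxE.
Qed.

Section Evaluation.
Variables (F : fieldType) (q : nat).
Hypothesis pcharFq : [pchar F].-nat q.
Implicit Types (f g : blin F) (p : F * F).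

Definition evalp f p := blin_eval q f p.1 p.2.

Let q_gt0 : (0 < q)%N. Proof. by case/andP: pcharFq. Qed.

Let expq0 : (0 : F) ^+ q = 0. Proof. by rewrite expr0n eqn0Ngt q_gt0. Qed.

Lemma sum_coef_widen (a : {poly F}) (u : nat -> F) N : (size a <= N)%N ->
  \sum_(i < size a) a`_i * u i = \sum_(i < N) a`_i * u i.
Proof.
move=> leaN; rewrite (big_ord_widen N (fun i => a`_i * u i) leaN) big_mkcond /=.
by apply: eq_bigr => i _; case: ltnP => // le_a_i; rewrite nth_default ?mul0r.
Qed.

Lemma blin_eval_widen f x y N :
  (size (blx f) <= N)%N -> (size (bly f) <= N)%N ->
  blin_eval q f x y = \sum_(i < N) (blx f)`_i * x ^+ (q ^ i)
                      + \sum_(i < N) (bly f)`_i * y ^+ (q ^ i).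
Proof.
by move=> lexN leyN; rewrite /blin_eval (sum_coef_widen (fun i => x ^+ (q ^ i)) lexN)
  (sum_coef_widen (fun i => y ^+ (q ^ i)) leyN).
Qed.

Lemma sum_coefB (a b : {poly F}) (u : nat -> F) :
  \sum_(i < size (a - b)) (a - b)`_i * u i =
  \sum_(i < size a) a`_i * u i - \sum_(i < size b) b`_i * u i.
Proof.
have le_ab : (size (a - b)%R <= maxn (size a) (size b))%N.
  by rewrite (leq_trans (size_polyD _ _)) ?size_polyN.
rewrite (sum_coef_widen u le_ab) (sum_coef_widen u (leq_maxl _ (size b))).
rewrite (sum_coef_widen u (leq_maxr (size a) _)) -sumrB.
by apply: eq_bigr => i _; rewrite coefB mulrBl.
Qed.

Lemma evalp_sub f g p : evalp (blin_sub f g) p = evalp f p - evalp g p.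
Proof.
rewrite /evalp /blin_eval /= (sum_coefB _ _ (fun i => p.1 ^+ (q ^ i))).
by rewrite (sum_coefB _ _ (fun i => p.2 ^+ (q ^ i))) addrACA opprD.
Qed.

Lemma evalp_scale c f p : evalp (blin_scale c f) p = c * evalp f p.
Proof.
rewrite /evalp /blin_eval /=.
rewrite (sum_coef_widen (fun i => p.1 ^+ (q ^ i)) (size_scale_leq c (blx f))).
rewrite (sum_coef_widen (fun i => p.2 ^+ (q ^ i)) (size_scale_leq c (bly f))).
by rewrite mulrDr !mulr_sumr; congr (_ + _); apply: eq_bigr => i _; rewrite coefZ mulrA.
Qed.

Lemma size_frob_coef (a : {poly F}) N : (size a <= N)%N ->
  (size (map_poly (fun c : F => c ^+ q) a * 'X)%R <= N.+1)%N.
Proof.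
move=> leaN; apply/leq_sizeP => j lt_j; rewrite coefMX; case: eqP => // _.
by rewrite coef_map_id0 // nth_default // (leq_trans leaN) // -ltnS (ltn_predK lt_j).
Qed.

Lemma evalp_frob f p : evalp (blin_frob q f) p = evalp f p ^+ q.
Proof.
pose N := maxn (size (blx f)) (size (bly f)).
have lexN : (size (blx f) <= N)%N by apply: leq_maxl.
have leyN : (size (bly f) <= N)%N by apply: leq_maxr.
rewrite /evalp (blin_eval_widen _ _ lexN leyN).
rewrite (@blin_eval_widen (blin_frob q f) _ _ N.+1
  (size_frob_coef lexN) (size_frob_coef leyN)).
rewrite exprDn_pchar // !expr_sum_pchar //.
rewrite !big_ord_recl !coefMX /= !mul0r !add0r.
by congr (_ + _); apply: eq_bigr => i _;
  rewrite /bump /= coefMX /= coef_map_id0 // exprMn -exprM expnSr.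
Qed.

Lemma evalp_iter_frob t f p :
  evalp (iter t (blin_frob q) f) p = evalp f p ^+ (q ^ t).
Proof. by elim: t => [|t IHt]; rewrite ?expr1 // iterS evalp_frob IHt expnSr exprM. Qed.

Lemma evalp_frob_step_eq0 D f p : evalp f p = 0 \/ evalp f p = D ->
  evalp (frob_step q D f) p = 0.
Proof.
rewrite /frob_step evalp_sub evalp_frob evalp_scale => -[->|->].
  by rewrite expq0 mulr0 subr0.
by rewrite -exprSr subn1 (ltn_predK q_gt0) subrr.
Qed.

End Evaluation.

Lemma nat_parity_ind (P : nat -> Prop) :
  (forall j, P j.*2) -> (forall j, P j.*2.+1) -> forall n, P n.
Proof.
move=> Peven Podd n; rewrite -(odd_double_half n).
by case: odd; rewrite ?add1n ?add0n.
Qed.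

Lemma ltn_odd_eq m n : odd m = odd n -> (m < n)%N -> (m.+2 <= n)%N.
Proof.
move=> odd_mn lt_mn; rewrite ltn_neqAle lt_mn andbT.
by apply/eqP => eq_n; move: odd_mn; rewrite -eq_n /=; case: odd.
Qed.

Lemma half_leq_even_odd m n : ~~ odd m -> odd n -> (m./2 <= n./2)%N = (m < n)%N.
Proof.
elim/nat_parity_ind: m => a; rewrite /= odd_double //= => _.
elim/nat_parity_ind: n => b; rewrite /= odd_double //= => _.
by rewrite doubleK uphalf_double ltnS leq_double.
Qed.

Section LeadPosition.
Variables (F : fieldType) (q k : nat).
Hypothesis q_gt0 : (0 < q)%N.
Implicit Types (f g h : blin F).

Definition wcoef f n : F :=
  if odd n then (if (k - 1 <= n./2)%N then (bly f)`_(n./2 - (k - 1)) else 0)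
  else (blx f)`_(n./2).

Lemma wcoef_double f i : wcoef f i.*2 = (blx f)`_i.
Proof. by rewrite /wcoef odd_double doubleK. Qed.

Lemma wcoef_double_succ f j :
  wcoef f j.*2.+1 = if (k - 1 <= j)%N then (bly f)`_(j - (k - 1)) else 0.
Proof. by rewrite /wcoef (half_bit_double j true) /= odd_double. Qed.

Lemma wcoef_sub f g n : wcoef (blin_sub f g) n = wcoef f n - wcoef g n.
Proof.
by rewrite /wcoef /=; case: odd; rewrite ?coefB //; case: ifP; rewrite ?subr0 ?coefB.
Qed.

Lemma wcoef_scale c f n : wcoef (blin_scale c f) n = c * wcoef f n.
Proof.
by rewrite /wcoef /=; case: odd; rewrite ?coefZ //; case: ifP; rewrite ?mulr0 ?coefZ.
Qed.

Lemma wcoef_frob f n :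
  wcoef (blin_frob q f) n = if n is n'.+2 then wcoef f n' ^+ q else 0.
Proof.
have expq0 : (0 : F) ^+ q = 0 by rewrite expr0n eqn0Ngt q_gt0.
have coef_frob (a : {poly F}) i :
    (map_poly (fun c => c ^+ q) a * 'X)`_i = if i is i'.+1 then a`_i' ^+ q else 0.
  by rewrite coefMX; case: i => //= i; rewrite coef_map_id0.
case: n => [|[|n]]; rewrite /wcoef /= ?coef_frob //.
  by case: ifP => _; rewrite ?sub0n ?coef_frob.
rewrite negbK; case: odd; rewrite ?coef_frob //.
case: (leqP (k - 1) n./2) => [le_k_n | lt_n_k].
  by rewrite (leq_trans le_k_n) // subSn // coef_frob.
rewrite expq0; case: ifP => // le_k_Sn.
by have -> : ((n./2).+1 - (k - 1) = 0)%N by apply/eqP; rewrite subn_eq0.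
Qed.

Definition below f mu := forall n, (mu <= n)%N -> wcoef f n = 0.

Lemma below_leq f m m' : below f m -> (m <= m')%N -> below f m'.
Proof. by move=> f_m le_m_m' n /(leq_trans le_m_m'); apply: f_m. Qed.

Definition lead_pos f n := wcoef f n != 0 /\ below f n.+1.

Lemma below_exists f : exists mu, below f mu.
Proof.
exists (size (blx f) + (k - 1) + size (bly f)).*2; rewrite /below.
elim/nat_parity_ind => j; rewrite ?leq_double ?leq_Sdouble => le_j.
  by rewrite wcoef_double nth_default // (leq_trans _ le_j) // -addnA leq_addr.
rewrite wcoef_double_succ; case: ifP => // le_k_j; rewrite nth_default //.
by rewrite leq_subRL // (leq_trans _ le_j) // -addnA leq_addl.
Qed.

Lemma below0_eval f x y : below f 0 -> blin_eval q f x y = 0.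
Proof.
move=> f0; rewrite /blin_eval; have [-> ->] : blx f = 0 /\ bly f = 0.
  split; apply/polyP => j; rewrite coef0.
    by rewrite -wcoef_double f0.
  by have := f0 (k - 1 + j).*2.+1 isT; rewrite wcoef_double_succ leq_addr addKn.
by rewrite size_poly0 !big_ord0 addr0.
Qed.

Lemma below_lead_pos f mu :
  below f mu -> below f 0 \/ exists2 n, (n < mu)%N & lead_pos f n.
Proof.
elim: mu => [|mu IHmu] f_mu; first by left.
have [f_mu0 | nz_mu] := eqVneq (wcoef f mu) 0; last by right; exists mu.
have f_mu' : below f mu by move=> n; rewrite leq_eqVlt => /orP[/eqP <- // | /f_mu].
case: (IHmu f_mu') => [|[n lt_n_mu lead_n]]; first by left.
by right; exists n; rewrite // ltnW.
Qed.

Lemma lead_pos_nonzero f n : lead_pos f n -> ~~ blin_zero f.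
Proof.
case=> nz_n _; apply: contra nz_n => /andP[/eqP x0 /eqP y0].
by rewrite /wcoef x0 y0; case: odd; rewrite ?coef0 //; case: ifP; rewrite ?coef0.
Qed.

Lemma lead_pos_lincomb h f g n c d :
  lead_pos f n -> below g n -> c != 0 ->
  (forall n', wcoef h n' = c * wcoef f n' + d * wcoef g n') -> lead_pos h n.
Proof.
move=> [nz_f f_n] g_n nz_c hE; split; first by rewrite hE g_n // mulr0 addr0 mulf_neq0.
by move=> n' lt_n_n'; rewrite hE f_n // g_n ?(ltnW lt_n_n') // !mulr0 addr0.
Qed.

Lemma lead_pos_frob f n : lead_pos f n -> lead_pos (blin_frob q f) n.+2.
Proof.
case=> nz_n f_n; split; first by rewrite wcoef_frob expf_eq0 negb_and nz_n orbT.
by case=> [|[|n']] //; rewrite !ltnS wcoef_frob => /f_n ->; rewrite expr0n eqn0Ngt q_gt0.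
Qed.

Lemma lead_pos_frob_step D f n : lead_pos f n -> lead_pos (frob_step q D f) n.+2.
Proof.
move=> lead_n.
apply: (lead_pos_lincomb (d := - D ^+ (q - 1)) (lead_pos_frob lead_n) _ (oner_neq0 F)).
  by case: lead_n => _ f_n n' /ltnW; apply: f_n.
by move=> n'; rewrite wcoef_sub wcoef_scale mul1r mulNr.
Qed.

Lemma lead_pos_iter_frob t f n :
  lead_pos f n -> lead_pos (iter t (blin_frob q) f) (n + t.*2).
Proof.
move=> lead_n; elim: t => [|t IHt]; first by rewrite addn0.
by rewrite iterS doubleS !addnS; apply: lead_pos_frob.
Qed.

Lemma lead_pos_iter_frob_half f n n' : lead_pos f n -> (n <= n')%N ->
  odd n' = odd n -> lead_pos (iter ((n' - n)./2) (blin_frob q) f) n'.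
Proof.
move=> lead_f le_n_n' odd_n'; have := lead_pos_iter_frob ((n' - n)./2) lead_f.
have even_diff : ((n' - n)./2).*2 = (n' - n)%N.
  by rewrite -[RHS]odd_double_half oddB // odd_n' addbb.
by rewrite even_diff subnKC.
Qed.

Lemma below_cancel_lead h g n : lead_pos h n -> lead_pos g n ->
  below (blin_sub h (blin_scale (wcoef h n / wcoef g n) g)) n.
Proof.
move=> [_ h_n] [nz_g g_n] n'; rewrite leq_eqVlt wcoef_sub wcoef_scale.
by case/orP=> [/eqP <- | /[dup] /h_n -> /g_n ->]; rewrite ?mulfVK ?subrr ?mulr0 ?subr0.
Qed.

Lemma lead_pos_max f n n' : lead_pos f n -> wcoef f n' != 0 -> (n' <= n)%N.
Proof. by case=> _ f_n; apply: contraTleq => /f_n ->; rewrite eqxx. Qed.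

Lemma wcoef_odd_neq0 f n : odd n -> wcoef f n != 0 -> ((k - 1).*2.+1 <= n)%N.
Proof.
elim/nat_parity_ind: n => j; rewrite ?odd_double // wcoef_double_succ.
by case: ifP => [le_k_j _ | _]; rewrite ?ltnS ?leq_double ?eqxx.
Qed.

Lemma coef_neq0_size (a : {poly F}) i : a`_i != 0 -> (i <= (size a).-1)%N.
Proof.
move=> nz_i; rewrite -ltnS (leq_trans _ (leqSpred _)) //.
by apply: contraTltn nz_i => /(nth_default 0) ->; rewrite eqxx.
Qed.

Lemma wdeg_lead_pos f n : lead_pos f n -> wdeg k f = n./2.
Proof.
move=> lead_n; apply/eqP; rewrite /wdeg eqn_leq geq_max -andbA; apply/and3P; split.
- case: ifP => // nz_x; rewrite geq_half_double (lead_pos_max lead_n) //.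
  by rewrite wcoef_double -lead_coefE lead_coef_eq0.
- case: ifP => // nz_y; rewrite geq_half_double ltnW // (lead_pos_max lead_n) //.
  by rewrite wcoef_double_succ leq_addr addKn -lead_coefE lead_coef_eq0.
case: lead_n => + _; elim/nat_parity_ind: n => j.
  rewrite doubleK wcoef_double => nz_j.
  have nz_x : blx f != 0 by apply: contraNneq nz_j => ->; rewrite coef0.
  by rewrite nz_x leq_max coef_neq0_size.
rewrite (half_bit_double j true) wcoef_double_succ.
case: ifP => [le_k_j nz_j | _]; last by rewrite eqxx.
have nz_y : bly f != 0 by apply: contraNneq nz_j => ->; rewrite coef0.
by rewrite nz_y leq_max -leq_subLR coef_neq0_size ?orbT.
Qed.

Lemma lead_pos_blin_x : lead_pos (blin_x F) 0.
Proof.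
split; first by rewrite -[0%N]/(0.*2)%N wcoef_double coef1 oner_neq0.
rewrite /below; elim/nat_parity_ind => j; last by rewrite wcoef_double_succ coef0; case: ifP.
by rewrite wcoef_double coef1; case: j.
Qed.

Lemma lead_pos_blin_y : lead_pos (blin_y F) (k - 1).*2.+1.
Proof.
split; first by rewrite wcoef_double_succ leqnn subnn coef1 oner_neq0.
rewrite /below; elim/nat_parity_ind => j; first by rewrite wcoef_double coef0.
rewrite ltnS ltn_double wcoef_double_succ => lt_k_j; rewrite ltnW // coef1.
by rewrite subn_eq0 leqNgt lt_k_j.
Qed.

End LeadPosition.

Section MinimalBasis.
Variables (F : fieldType) (q k : nat).
Hypothesis pcharFq : [pchar F].-nat q.
Implicit Types (f g h : blin F) (s : seq (F * F)) (p : F * F).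

Let q_gt0 : (0 < q)%N. Proof. by case/andP: pcharFq. Qed.

Local Notation evalp := (evalp q).
Local Notation wcoef := (wcoef k).
Local Notation below := (below k).
Local Notation lead_pos := (lead_pos k).

Definition vanish s f := forall p, p \in s -> evalp f p = 0.

Definition minimal_lead s n :=
  forall g n', vanish s g -> lead_pos g n' -> odd n' = odd n -> (n <= n')%N.

Definition basis_elt s f n := [/\ vanish s f, lead_pos f n & minimal_lead s n].

Lemma vanish_rcons s p f : vanish (rcons s p) f <-> vanish s f /\ evalp f p = 0.
Proof.
split=> [vf | [vf fp] p']; last by rewrite mem_rcons inE => /orP[/eqP -> | /vf].
by split=> [p' s_p' |]; apply: vf; rewrite mem_rcons inE ?s_p' ?orbT ?eqxx.
Qed.

Lemma vanish_sub s f g : vanish s f -> vanish s g -> vanish s (blin_sub f g).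
Proof. by move=> vf vg p s_p; rewrite evalp_sub vf ?vg ?subr0. Qed.

Lemma vanish_scale s c f : vanish s f -> vanish s (blin_scale c f).
Proof. by move=> vf p s_p; rewrite evalp_scale vf ?mulr0. Qed.

Lemma evalp_iter_frob_eq0 t f p : evalp f p = 0 -> evalp (iter t (blin_frob q) f) p = 0.
Proof. by move=> fp; rewrite evalp_iter_frob // fp expr0n expn_eq0 eqn0Ngt q_gt0. Qed.

Lemma minimal_lead_rcons s p n : minimal_lead s n -> minimal_lead (rcons s p) n.
Proof. by move=> min_n g n' /vanish_rcons[vg _]; apply: min_n. Qed.

Lemma basis_elt_rcons s f n p :
  basis_elt s f n -> evalp f p = 0 -> basis_elt (rcons s p) f n.
Proof.
by case=> vf lead_f min_f fp; split; [apply/vanish_rcons | | exact: minimal_lead_rcons].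
Qed.

Lemma basis_vanish_below s f0 f1 n0 n1 p mu :
    basis_elt s f0 n0 -> basis_elt s f1 n1 -> odd n0 != odd n1 ->
    ((n0 < mu)%N -> evalp f0 p = 0) -> ((n1 < mu)%N -> evalp f1 p = 0) ->
  forall h, vanish s h -> below h mu -> evalp h p = 0.
Proof.
(* Induction on the bound [mu]: the leading term of [h] is cancelled against a
   Frobenius power of the basis element of the same parity, which exists by
   minimality. *)
move=> B0 B1 odd01; elim/ltn_ind: mu => mu IHmu f0p f1p h vh h_mu.
have [h0 | [n lt_n_mu lead_h]] := below_lead_pos h_mu; first exact: (below0_eval _ _ _ h0).
have [f [nf [[vf lead_f min_f] odd_f fp]]] : exists f nf,
    [/\ basis_elt s f nf, odd n = odd nf & ((nf < mu)%N -> evalp f p = 0)].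
  have [odd_n0 | odd_n1] : odd n = odd n0 \/ odd n = odd n1.
    by case: (odd n) (odd n0) (odd n1) odd01 => [] [] []; auto.
  - by exists f0, n0.
  - by exists f1, n1.
have le_nf_n := min_f h n vh lead_h odd_f.
pose g := iter ((n - nf)./2) (blin_frob q) f.
have lead_g : lead_pos g n by apply: lead_pos_iter_frob_half.
pose c := wcoef h n / wcoef g n.
have hE : evalp h p = evalp (blin_sub h (blin_scale c g)) p + c * evalp g p.
  by rewrite evalp_sub // evalp_scale // subrK.
rewrite hE evalp_iter_frob_eq0 ?fp ?(leq_ltn_trans le_nf_n) // mulr0 addr0.
apply: (IHmu n) => //.
- by move=> lt_n0_n; apply: f0p; apply: ltn_trans lt_n_mu.
- by move=> lt_n1_n; apply: f1p; apply: ltn_trans lt_n_mu.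
- apply: vanish_sub vh (vanish_scale _ _) => p' s_p'.
  exact: evalp_iter_frob_eq0 (vf p' s_p').
exact: below_cancel_lead.
Qed.

Lemma vanish_rcons_not_lead s f0 f1 n0 n1 p g :
    basis_elt s f0 n0 -> basis_elt s f1 n1 -> odd n0 != odd n1 ->
    evalp f0 p != 0 -> ((n1 < n0)%N -> evalp f1 p = 0) ->
  vanish (rcons s p) g -> ~ lead_pos g n0.
Proof.
move=> B0 B1 odd01 nz_f0p f1p /vanish_rcons[vg gp] lead_g.
have [vf0 lead_f0 _] := B0.
pose c := wcoef g n0 / wcoef f0 n0.
have nz_c : c != 0.
  by case: lead_g lead_f0 => [nz_g _] [nz_f0 _]; rewrite mulf_neq0 ?invr_eq0.
suff : evalp (blin_sub g (blin_scale c f0)) p = 0.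
  rewrite evalp_sub // evalp_scale // gp sub0r => /eqP.
  by rewrite oppr_eq0 mulf_eq0 (negbTE nz_c) (negbTE nz_f0p).
apply: (basis_vanish_below B0 B1 odd01 (mu := n0)) => //; first by rewrite ltnn.
  exact: vanish_sub vg (vanish_scale _ vf0).
exact: below_cancel_lead.
Qed.

Lemma basis_elt_frob_step s f0 f1 n0 n1 p :
    basis_elt s f0 n0 -> basis_elt s f1 n1 -> odd n0 != odd n1 ->
    evalp f0 p != 0 -> ((n1 < n0)%N -> evalp f1 p = 0) ->
  basis_elt (rcons s p) (frob_step q (evalp f0 p) f0) n0.+2.
Proof.
move=> B0 B1 odd01 nz_f0p f1p; have [vf0 lead_f0 min_f0] := B0; split.
- apply/vanish_rcons; split; last by apply: evalp_frob_step_eq0 => //; right.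
  by move=> p' /vf0 f0p'; apply: evalp_frob_step_eq0 => //; left.
- exact: lead_pos_frob_step.
move=> g n vg lead_g; rewrite /= negbK => odd_n.
have /= := min_f0 g n (proj1 (vanish_rcons _ _ _) vg).1 lead_g odd_n.
rewrite leq_eqVlt => /orP[/eqP eq_n0 | ]; last exact: ltn_odd_eq.
by case: (vanish_rcons_not_lead B0 B1 odd01 nz_f0p f1p vg); rewrite eq_n0.
Qed.

Lemma basis_elt_comb s f0 f1 n0 n1 p :
    basis_elt s f0 n0 -> basis_elt s f1 n1 -> n0 != n1 ->
    evalp f0 p != 0 -> evalp f1 p != 0 ->
  basis_elt (rcons s p)
    (blin_sub (blin_scale (evalp f1 p) f0) (blin_scale (evalp f0 p) f1)) (maxn n0 n1).
Proof.
move=> [vf0 lead_f0 min_f0] [vf1 lead_f1 min_f1] ne01 nz_f0p nz_f1p.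
have vcomb : vanish (rcons s p)
    (blin_sub (blin_scale (evalp f1 p) f0) (blin_scale (evalp f0 p) f1)).
  apply/vanish_rcons; split; first exact: vanish_sub (vanish_scale _ _) (vanish_scale _ _).
  by rewrite evalp_sub // !evalp_scale // mulrC subrr.
case: ltngtP ne01 => // lt01 _; (split => //; last exact: minimal_lead_rcons).
  apply: (lead_pos_lincomb (c := - evalp f0 p) (d := evalp f1 p) lead_f1).
  - exact: below_leq (proj2 lead_f0) lt01.
  - by rewrite oppr_eq0.
  by move=> n; rewrite wcoef_sub !wcoef_scale mulNr addrC.
apply: (lead_pos_lincomb (c := evalp f1 p) (d := - evalp f0 p) lead_f0) => //.
  exact: below_leq (proj2 lead_f1) lt01.
by move=> n; rewrite wcoef_sub !wcoef_scale mulNr.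
Qed.

Definition min_basis s (fs : blin F * blin F) := exists n0 n1,
  [/\ basis_elt s fs.1 n0, basis_elt s fs.2 n1, ~~ odd n0 & odd n1].

Lemma min_basis_nil : min_basis [::] (blin_x F, blin_y F).
Proof.
exists 0%N, (k - 1).*2.+1; split => //=; last by rewrite odd_double.
  by split; [by [] | exact: lead_pos_blin_x | move=> g n _ _ _; apply: leq0n].
split; [by [] | exact: lead_pos_blin_y |].
move=> g n _ [nz_g _]; rewrite /= odd_double /= => odd_n.
exact: wcoef_odd_neq0 nz_g.
Qed.

Lemma min_basis_step s fs p : min_basis s fs ->
    ~ (evalp fs.1 p = 0 /\ evalp fs.2 p = 0) ->
  min_basis (rcons s p) (algo_step q k fs p).
Proof.
case: fs => f0 f1 [n0 [n1 [B0 B1 even_n0 odd_n1]]] /= not_both.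
have odd01 : odd n0 != odd n1 by rewrite odd_n1 (negbTE even_n0).
have odd10 : odd n1 != odd n0 by rewrite eq_sym.
rewrite /algo_step -!/(evalp _ _).
have [f0p | nz_f0p] := eqVneq (evalp f0 p) 0.
  have nz_f1p : evalp f1 p != 0 by apply/eqP => f1p; apply: not_both.
  exists n0, n1.+2; split; rewrite /= ?negbK //; first exact: basis_elt_rcons.
  exact: basis_elt_frob_step B1 B0 odd10 nz_f1p (fun _ => f0p).
have [f1p | nz_f1p] := eqVneq (evalp f1 p) 0.
  exists n0.+2, n1; split; rewrite /= ?negbK //; last exact: basis_elt_rcons.
  exact: basis_elt_frob_step B0 B1 odd01 nz_f0p (fun _ => f1p).
have [[_ lead_f0 _] [_ lead_f1 _]] := (B0, B1).
have ne01 : n0 != n1 by apply: contraNneq odd01 => ->.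
rewrite (wdeg_lead_pos lead_f0) (wdeg_lead_pos lead_f1) half_leq_even_odd //.
have comb := basis_elt_comb B0 B1 ne01 nz_f0p nz_f1p.
case: ltngtP => [lt01 | lt10 | eq01]; last by rewrite eq01 eqxx in ne01.
  exists n0.+2, n1; split; rewrite /= ?negbK //.
    by apply: basis_elt_frob_step B0 B1 odd01 nz_f0p _ => /(ltn_trans lt01); rewrite ltnn.
  by rewrite (maxn_idPr (ltnW lt01)) in comb.
exists n0, n1.+2; split; rewrite /= ?negbK //.
  by rewrite (maxn_idPl (ltnW lt10)) in comb.
by apply: basis_elt_frob_step B1 B0 odd10 nz_f1p _ => /(ltn_trans lt10); rewrite ltnn.
Qed.

Lemma min_basis_root s fs p : min_basis s fs ->
  evalp fs.1 p = 0 -> evalp fs.2 p = 0 -> forall h, vanish s h -> evalp h p = 0.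
Proof.
case=> n0 [n1 [B0 B1 even_n0 odd_n1]] f0p f1p h vh.
have [mu h_mu] := below_exists k h.
apply: (basis_vanish_below B0 B1 _ (fun _ => f0p) (fun _ => f1p) vh h_mu).
by rewrite odd_n1 (negbTE even_n0).
Qed.

End MinimalBasis.

Section FiniteField.
Variables (F : finFieldType) (q m : nat).
Hypotheses (q_gt1 : (1 < q)%N) (m_gt0 : (0 < m)%N) (cardF : #|F| = (q ^ m)%N).
Implicit Types (z : F) (s : seq (F * F)) (p : F * F).

Let pcharFq : [pchar F].-nat q := pchar_nat_card_root m_gt0 cardF.
Let q_gt0 : (0 < q)%N := ltnW q_gt1.

Let expr_card z : z ^+ (q ^ m) = z.
Proof. by rewrite -cardF expf_card. Qed.

Definition trace z := \sum_(i < m) z ^+ (q ^ i).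

Lemma trace_expq z : trace z ^+ q = trace z.
Proof.
rewrite /trace expr_sum_pchar //; case: m m_gt0 expr_card => // m' _ exprm'.
rewrite big_ord_recr big_ord_recl /= -exprM -expnSr exprm' expr1 addrC.
by congr (_ + _); apply: eq_bigr => i _; rewrite -exprM -expnSr.
Qed.

Lemma trace_neq0 : exists z, trace z != 0.
Proof.
pose T : {poly F} := \sum_(i < m) 'X^(q ^ i).
have T_z z : T.[z] = trace z.
  by rewrite horner_sum; apply: eq_bigr => i _; rewrite hornerXn.
have nz_T : T != 0.
  apply/eqP => /(congr1 (fun a : {poly F} => a`_1)) /eqP; rewrite coef0 coef_sum.
  rewrite (bigD1 (Ordinal m_gt0)) //= coefXn expn0 eqxx big1 ?addr0 ?oner_eq0 //.
  move=> i; rewrite -val_eqE /= coefXn -{1}(expn0 q) eq_sym eqn_exp2l //.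
  by move=> /negbTE ->.
have size_T : (size T <= (q ^ m.-1).+1)%N.
  apply: leq_trans (size_sum _ _ _) _; apply/bigmax_leqP => i _.
  by rewrite size_polyXn ltnS leq_pexp2l // -ltnS prednK.
have /allPn[z _] : ~~ all (root T) (enum F).
  apply/negP => all_roots; have := max_poly_roots nz_T all_roots (enum_uniq F).
  rewrite -cardE cardF => /leq_trans/(_ size_T).
  by rewrite ltnS leqNgt ltn_exp2l // ltn_predL m_gt0.
by rewrite /root T_z; exists z.
Qed.

Lemma trace_sum_mul (mu z : nat -> F) N :
  (forall t, (t < m)%N -> \sum_(l < N) mu l * z l ^+ (q ^ t) = 0) ->
  forall b, \sum_(l < N) trace (b * mu l) * z l = 0.
Proof.
move=> mu_z b; under eq_bigr do rewrite mulr_suml.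
rewrite exchange_big /=; apply: big1 => i _.
have [-> | i_gt0] := posnP i.
  under eq_bigr do rewrite expn0 !expr1 -mulrA.
  by rewrite -mulr_sumr (mu_z 0%N) ?mulr0.
(* For i > 0, the sum over l is the (q ^ i)-th power of the equation t = m - i. *)
have lt_mi_m : (m - i < m)%N by rewrite ltn_subrL i_gt0 m_gt0.
have z_root l : z l = (z l ^+ (q ^ (m - i))) ^+ (q ^ i).
  by rewrite -exprM -expnD subnK ?expr_card // ltnW.
under eq_bigr do rewrite [z _]z_root -exprMn -mulrA.
rewrite -expr_sum_pchar ?pnatX ?pcharFq // -mulr_sumr mu_z // mulr0.
by rewrite expr0n expn_eq0 eqn0Ngt q_gt0.
Qed.

Definition frob_row p : 'rV[F]_(m + m) :=
  row_mx (\row_(t < m) p.1 ^+ (q ^ t)) (\row_(t < m) p.2 ^+ (q ^ t)).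

Definition blin_of_col (c : 'cV[F]_(m + m)) : blin F :=
  BLin (Poly [seq c (lshift m i) 0 | i <- enum 'I_m])
       (Poly [seq c (rshift m i) 0 | i <- enum 'I_m]).

Lemma evalp_blin_of_col c p : evalp q (blin_of_col c) p = (frob_row p *m c) 0 0.
Proof.
have size_Poly (u : 'I_m -> F) : (size (Poly [seq u i | i <- enum 'I_m]) <= m)%N.
  by rewrite (leq_trans (size_Poly _)) // size_map size_enum_ord.
have coef_Poly_enum (u : 'I_m -> F) (i : 'I_m) : (Poly [seq u i | i <- enum 'I_m])`_i = u i.
  by rewrite coef_Poly (nth_map i) ?size_enum_ord // nth_ord_enum.
rewrite /evalp (@blin_eval_widen _ _ (blin_of_col c) _ _ m) ?size_Poly // mxE big_split_ord /=.
by congr (_ + _); apply: eq_bigr => i _; rewrite ?row_mxEl ?row_mxEr mxE coef_Poly_enum mulrC.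
Qed.

Definition seq_indep s := forall c : nat -> F, (forall l, c l ^+ q = c l) ->
  \sum_(l < size s) c l * (nth (0, 0) s l).1 = 0 ->
  \sum_(l < size s) c l * (nth (0, 0) s l).2 = 0 ->
  forall l, (l < size s)%N -> c l = 0.

Lemma seq_indep_rcons s p : seq_indep (rcons s p) -> seq_indep s.
Proof.
move=> indep c c_fix sum1 sum2 l lt_l.
pose c' l := if (l < size s)%N then c l else 0.
have sum_c' (sel : F * F -> F) : \sum_(l < size s) c l * sel (nth (0, 0) s l) = 0 ->
    \sum_(l < size (rcons s p)) c' l * sel (nth (0, 0) (rcons s p) l) = 0.
  move=> sum_sel; rewrite size_rcons big_ord_recr /= /c' ltnn mul0r addr0 -[RHS]sum_sel.
  by apply: eq_bigr => i _; rewrite ltn_ord nth_rcons ltn_ord.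
have := indep c' _ (sum_c' fst sum1) (sum_c' snd sum2) l; rewrite /c' lt_l size_rcons.
apply=> [j|]; last exact: ltnW.
by case: ifP => // _; rewrite expr0n eqn0Ngt q_gt0.
Qed.

Lemma frob_span_dependent s p (D : 'I_(size s) -> F) :
    (forall t, (t < m)%N ->
       p.1 ^+ (q ^ t) = \sum_(l < size s) D l * (nth (0, 0) s l).1 ^+ (q ^ t)) ->
    (forall t, (t < m)%N ->
       p.2 ^+ (q ^ t) = \sum_(l < size s) D l * (nth (0, 0) s l).2 ^+ (q ^ t)) ->
  ~ seq_indep (rcons s p).
Proof.
(* The coefficients trace (- b * mu l) lie in F_q, and the one of p is trace b. *)
move=> span1 span2 indep; have [b /eqP[]] := trace_neq0.
pose mu l := if insub l is Some i then D i else -1.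
have mu_span (sel : F * F -> F) :
    (forall t, (t < m)%N ->
       sel p ^+ (q ^ t) = \sum_(l < size s) D l * sel (nth (0, 0) s l) ^+ (q ^ t)) ->
    forall t, (t < m)%N ->
    \sum_(l < size (rcons s p)) mu l * sel (nth (0, 0) (rcons s p) l) ^+ (q ^ t) = 0.
  move=> span t lt_t; rewrite size_rcons big_ord_recr /= nth_rcons ltnn eqxx.
  rewrite /mu insubF ?ltnn // mulN1r span //; apply/eqP; rewrite subr_eq0; apply/eqP.
  by apply: eq_bigr => i _; rewrite valK nth_rcons ltn_ord.
pose coord (sel : F * F -> F) l := sel (nth (0, 0) (rcons s p) l).
have := indep (fun l => trace (- b * mu l)) (fun l => trace_expq _)
  (trace_sum_mul (z := coord fst) (mu_span fst span1) _)
  (trace_sum_mul (z := coord snd) (mu_span snd span2) _) (size s).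
by rewrite /mu insubF ?ltnn // size_rcons mulrN1 opprK => ->.
Qed.

Lemma seq_indep_separates s p :
  seq_indep (rcons s p) -> ~ (forall h, vanish q s h -> evalp q h p = 0).
Proof.
move=> indep vanish_p.
pose M := \matrix_(l < size s) frob_row (nth (0, 0) s l).
have /submxP[D def_p] : (frob_row p <= M)%MS.
  apply: submx_of_colker => c Mc0; apply/matrixP => i j; rewrite !ord1 [RHS]mxE.
  rewrite -evalp_blin_of_col; apply: vanish_p => pt s_pt.
  have lt_pt : (index pt s < size s)%N by rewrite index_mem.
  rewrite evalp_blin_of_col.
  have -> : frob_row pt = row (Ordinal lt_pt) M by rewrite rowK /= nth_index.
  by rewrite -row_mul Mc0 !mxE.
have D_span (t : 'I_(m + m)) : frob_row p 0 t = \sum_l D 0 l * frob_row (nth (0, 0) s l) 0 t.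
  by rewrite def_p mxE; apply: eq_bigr => l _; rewrite mxE.
apply: (frob_span_dependent (D := D 0)) indep => t lt_t.
  by have := D_span (lshift m (Ordinal lt_t)); rewrite row_mxEl mxE => ->;
    apply: eq_bigr => l _; rewrite row_mxEl mxE.
by have := D_span (rshift m (Ordinal lt_t)); rewrite row_mxEr mxE => ->;
  apply: eq_bigr => l _; rewrite row_mxEr mxE.
Qed.

Lemma seq_indep_enum r (P : 'I_r -> F * F) :
  Fq_lin_indep q P -> seq_indep [seq P i | i <- enum 'I_r].
Proof.
move=> indepP c c_fix sum1 sum2 l; set s := [seq P i | i <- enum 'I_r].
have size_s : size s = r by rewrite size_map size_enum_ord.
have sum_s (sel : F * F -> F) :
    \sum_(l < size s) c l * sel (nth (0, 0) s l) = \sum_(i < r) c i * sel (P i).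
  rewrite -(big_mkord xpredT (fun l => c l * sel (nth (0, 0) s l))) size_s big_mkord.
  by apply: eq_bigr => i _; rewrite (nth_map i) ?size_enum_ord // nth_ord_enum.
rewrite (sum_s fst) in sum1; rewrite (sum_s snd) in sum2; rewrite size_s => lt_l.
exact: (indepP (fun i => c i) (fun i => c_fix i) sum1 sum2 (Ordinal lt_l)).
Qed.

Lemma min_basis_algo k s : seq_indep s ->
  min_basis q k s (foldl (algo_step q k) (blin_x F, blin_y F) s).
Proof.
elim/last_ind: s => [|s p IHs] indep; first exact: min_basis_nil.
rewrite foldl_rcons; have B := IHs (seq_indep_rcons indep).
apply: min_basis_step => // -[f0p f1p].
exact: seq_indep_separates indep (min_basis_root pcharFq B f0p f1p).
Qed.

End FiniteField.

Section Monomials.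
Variables (F : fieldType) (q k : nat).
Implicit Types (f g : blin F).

Definition mono_pos (mo : mono) : nat :=
  match mo with inl i => i.*2 | inr j => (k - 1 + j).*2.+1 end.

Lemma mcoef_wcoef f mo : mcoef f mo = wcoef k f (mono_pos mo).
Proof. by case: mo => i; rewrite /= ?wcoef_double // wcoef_double_succ leq_addr addKn. Qed.

Lemma mono_lt_pos a b : mono_lt k a b = (mono_pos a < mono_pos b)%N.
Proof.
rewrite /mono_lt; case: a => i; case: b => j /=; rewrite ?andbF ?orbF ?andbT.
- by rewrite ltn_double.
- by rewrite ltnS leq_double [RHS]leq_eqVlt orbC.
- by rewrite -doubleS leq_double.
- by rewrite ltnS ltn_double.
Qed.

Lemma mono_pos_inj : injective mono_pos.
Proof.
case=> i [] j /= eq_ij.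
- by rewrite (double_inj eq_ij).
- by move: (congr1 odd eq_ij); rewrite /= !odd_double.
- by move: (congr1 odd eq_ij); rewrite /= !odd_double.
- by case: eq_ij => /double_inj /addnI ->.
Qed.

Lemma mono_le_pos a b : mono_le k a b = (mono_pos a <= mono_pos b)%N.
Proof.
by rewrite /mono_le mono_lt_pos [RHS]leq_eqVlt (inj_eq mono_pos_inj).
Qed.

Lemma wcoef_neq0_mono f n : wcoef k f n != 0 -> exists mo, n = mono_pos mo.
Proof.
elim/nat_parity_ind: n => j nz_j; first by exists (inl j).
have : ((k - 1).*2.+1 <= j.*2.+1)%N by apply: wcoef_odd_neq0 nz_j; rewrite /= odd_double.
by rewrite ltnS leq_double => le_k_j; exists (inr (j - (k - 1))%N); rewrite /= subnKC.
Qed.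

Lemma is_ltP f mo : is_lt k f mo <-> lead_pos k f (mono_pos mo).
Proof.
rewrite /is_lt mcoef_wcoef; split=> [[nz_f max_f] | lead_f].
  split=> // n lt_n; apply/eqP; apply: contraTT lt_n => /[dup] /wcoef_neq0_mono[mo' ->].
  by rewrite -mcoef_wcoef -leqNgt -mono_le_pos; apply: max_f.
split=> [|mo']; first by case: lead_f.
by rewrite mcoef_wcoef mono_le_pos; apply: lead_pos_max.
Qed.

Lemma vanish_enumP r (P : 'I_r -> F * F) g :
  vanish q [seq P i | i <- enum 'I_r] g <-> vanishes_on q P g.
Proof.
split=> [vg i | vg _ /mapP[i _ ->]]; last exact: vg.
by apply: vg; rewrite map_f ?mem_enum.
Qed.

Lemma basis_elt_minimal s f g mo mo' : basis_elt q k s f (mono_pos mo) ->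
    vanish q s g -> is_lt k g mo' -> odd (mono_pos mo') = odd (mono_pos mo) ->
  ~~ mono_lt k mo' mo.
Proof.
case=> _ _ min_f vg /is_ltP lead_g odd_mo.
by rewrite mono_lt_pos -leqNgt (min_f _ _ vg lead_g odd_mo).
Qed.

Lemma x_minimal_basis_elt r (P : 'I_r -> F * F) f d :
  basis_elt q k [seq P i | i <- enum 'I_r] f (mono_pos (inl d)) -> x_minimal q k P f.
Proof.
move=> B; have [vf lead_f _] := B.
split; first exact: lead_pos_nonzero lead_f.
split; first exact/vanish_enumP.
exists d; split; first exact/is_ltP.
move=> g e _ /vanish_enumP vg lt_g; apply: basis_elt_minimal B vg lt_g _.
by rewrite /= !odd_double.
Qed.

Lemma y_minimal_basis_elt r (P : 'I_r -> F * F) f d :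
  basis_elt q k [seq P i | i <- enum 'I_r] f (mono_pos (inr d)) -> y_minimal q k P f.
Proof.
move=> B; have [vf lead_f _] := B.
split; first exact: lead_pos_nonzero lead_f.
split; first exact/vanish_enumP.
exists d; split; first exact/is_ltP.
move=> g e _ /vanish_enumP vg lt_g; apply: basis_elt_minimal B vg lt_g _.
by rewrite /= !odd_double.
Qed.

Lemma min_basis_minimal r (P : 'I_r -> F * F) fs :
    min_basis q k [seq P i | i <- enum 'I_r] fs ->
  x_minimal q k P fs.1 /\ y_minimal q k P fs.2.
Proof.
case=> n0 [n1 [B0 B1 even_n0 odd_n1]].
have [[_ lead_f0 _] [_ lead_f1 _]] := (B0, B1).
have [[d|j] def_n0] := wcoef_neq0_mono (proj1 lead_f0); last first.
  by rewrite def_n0 /= odd_double in even_n0.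
have [[i|e] def_n1] := wcoef_neq0_mono (proj1 lead_f1).
  by rewrite def_n1 /= odd_double in odd_n1.
split; [apply: (x_minimal_basis_elt (d := d)) | apply: (y_minimal_basis_elt (d := e))].
  by rewrite -def_n0.
by rewrite -def_n1.
Qed.

End Monomials.

Theorem theorem16 (F : finFieldType) (q m k r : nat) (P : 'I_r -> F * F) :
  (1 < q)%N -> (0 < m)%N -> #|F| = (q ^ m)%N -> (1 <= k)%N ->
  Fq_lin_indep q P ->
  x_minimal q k P (algo q k P).1 /\ y_minimal q k P (algo q k P).2.
Proof.
move=> q_gt1 m_gt0 cardF _ indepP.
apply: min_basis_minimal; apply: (min_basis_algo q_gt1 m_gt0 cardF).
exact: seq_indep_enum.
Qed.
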